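(* Let $\mathcal M=(\mathbf M^{(\lambda)})_{\lambda>0}$ be a weight matrix on $\mathbb N_0^d$. (i) If (R1): for every $\lambda>0$ there exist $\kappa\ge\lambda$, $B,C,H>0$ with $\alpha^{\alpha/2}M^{(\lambda)}_\beta\le BC^{|\alpha|}H^{|\alpha+\beta|}M^{(\kappa)}_{\alpha+\beta}$ for all $\alpha,\beta\in\mathbb N_0^d$, and (R2): for every $\lambda>0$ there exist $\kappa\ge\lambda$, $A\ge1$ with $M^{(\lambda)}_{\alpha+e_j}\le A^{|\alpha|+1}M^{(\kappa)}_\alpha$ for all $\alpha$ and $1\le j\le d$, then $H_\gamma\in\mathcal S_{\{\mathcal M\}}$ for all $\gamma\in\mathbb N_0^d$. (ii) If (B1): for every $\lambda>0$ there exist $0<\kappa\le\lambda$, $H>0$ such that for every $C>0$ there is $B>0$ with $\alpha^{\alpha/2}M^{(\kappa)}_\beta\le BC^{|\alpha|}H^{|\alpha+\beta|}M^{(\lambda)}_{\alpha+\beta}$ for all $\alpha,\beta$, and (B2): for every $\lambda>0$ there exist $0<\kappa\le\lambda$, $A\ge1$ with $M^{(\kappa)}_{\alpha+e_j}\le A^{|\alpha|+1}M^{(\lambda)}_\alpha$ for all $\alpha$ and $1\le j\le d$, then $H_\gamma\in\mathcal S_{(\mathcal M)}$ for all $\gamma\in\mathbb N_0^d$.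
   Context: A weight matrix is a family $\mathcal M=(\mathbf M^{(\lambda)})_{\lambda>0}$ with $\mathbf M^{(\lambda)}=(M^{(\lambda)}_\alpha)_{\alpha\in\mathbb N_0^d}$ sequences of positive reals, $M^{(\lambda)}_0=1$, and $M^{(\lambda)}_\alpha\le M^{(\kappa)}_\alpha$ for all $\alpha$ whenever $0<\lambda\le\kappa$. Notation: $|\alpha|=\sum\alpha_j$, $e_j$ the $j$-th unit vector, $\alpha^{\alpha/2}=\prod_j\alpha_j^{\alpha_j/2}$ with $0^0=1$. $\|f\|_{\infty,\mathbf M,h}:=\sup_{\alpha,\beta}\frac{\|x^\alpha\partial^\beta f\|_\infty}{h^{|\alpha+\beta|}M_{\alpha+\beta}}$; $\mathcal S_{\{\mathcal M\}}$ ($\mathcal S_{(\mathcal M)}$) is the set of $f\in C^\infty(\mathbb R^d)$ with $\|f\|_{\infty,\mathbf M^{(\lambda)},h}<\infty$ for some (for all) $\lambda,h>0$. Hermite functions: $H_\gamma(x)=(2^{|\gamma|}\gamma!\pi^{d/2})^{-1/2}h_\gamma(x)e^{-|x|^2/2}$, $h_\gamma(x)=(-1)^{|\gamma|}e^{|x|^2}\partial^\gamma e^{-|x|^2}$. *)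

From HB Require Import structures.
From mathcomp Require Import all_boot all_order all_algebra.
From mathcomp Require Import all_classical all_reals all_analysis.
Set Implicit Arguments. Unset Strict Implicit. Unset Printing Implicit Defensive.
Import Order.TTheory GRing.Theory Num.Theory.
Import numFieldNormedType.Exports.
Local Open Scope ring_scope.

Definition mi_abs (d : nat) (a : 'I_d -> nat) : nat := (\sum_(i < d) a i)%N.
Definition mi_add (d : nat) (a b : 'I_d -> nat) : 'I_d -> nat := fun i => (a i + b i)%N.
Definition mi_unit (d : nat) (j : 'I_d) : 'I_d -> nat := fun i => nat_of_bool (i == j).
Definition mi_zero (d : nat) : 'I_d -> nat := fun _ => 0%N.
Definition mi_fact (d : nat) (a : 'I_d -> nat) : nat := (\prod_(i < d) (a i)`!)%N.
(* alpha^{alpha/2} = prod_j alpha_j^{alpha_j/2} = prod_j sqrt(alpha_j^{alpha_j}), 0^0 = 1 *)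
Definition mi_halfpow (R : realType) (d : nat) (a : 'I_d -> nat) : R :=
  \prod_(i < d) Num.sqrt (((a i) ^ (a i))%N)%:R.

Definition weight_matrix (R : realType) (d : nat) (M : R -> ('I_d -> nat) -> R) : Prop :=
  (forall l : R, 0 < l -> forall a, 0 < M l a) /\
  (forall l : R, 0 < l -> M l (@mi_zero d) = 1) /\
  (forall l k : R, 0 < l -> l <= k -> forall a, M l a <= M k a).

Definition coord_unit (R : realType) (d : nat) (j : 'I_d) : 'rV[R]_d := delta_mx 0 j.

Definition pderiv (R : realType) (d : nat) (j : 'I_d) (f : 'rV[R]_d -> R) : 'rV[R]_d -> R :=
  fun x => derive f x (@coord_unit R d j).

Definition dseq (R : realType) (d : nat) (s : seq 'I_d) (f : 'rV[R]_d -> R) : 'rV[R]_d -> R :=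
  foldr (@pderiv R d) f s.

Definition dmulti (R : realType) (d : nat) (b : 'I_d -> nat) (f : 'rV[R]_d -> R) : 'rV[R]_d -> R :=
  foldr (fun j g => iter (b j) (@pderiv R d j) g) f (enum 'I_d).

Definition smooth (R : realType) (d : nat) (f : 'rV[R]_d -> R) : Prop :=
  forall s : seq 'I_d,
    continuous (dseq s f) /\
    (forall (x : 'rV[R]_d) (j : 'I_d), derivable (dseq s f) x (@coord_unit R d j)).

Definition monom (R : realType) (d : nat) (a : 'I_d -> nat) (x : 'rV[R]_d) : R :=
  \prod_(i < d) (x 0 i) ^+ (a i).

Definition sqnorm (R : realType) (d : nat) (x : 'rV[R]_d) : R := \sum_(i < d) (x 0 i) ^+ 2.

(* ||f||_{infty, M, h} < infty, i.e. sup_{alpha,beta} ||x^alpha d^beta f||_infty /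
   (h^{|alpha+beta|} M_{alpha+beta}) is finite *)
Definition finite_norm (R : realType) (d : nat) (M : ('I_d -> nat) -> R) (h : R)
  (f : 'rV[R]_d -> R) : Prop :=
  exists K : R, forall (a b : 'I_d -> nat) (x : 'rV[R]_d),
    `| monom a x * dmulti b f x | <= K * (h ^+ mi_abs (mi_add a b) * M (mi_add a b)).

Definition S_roumieu (R : realType) (d : nat) (M : R -> ('I_d -> nat) -> R)
  (f : 'rV[R]_d -> R) : Prop :=
  smooth f /\ exists l h : R, 0 < l /\ 0 < h /\ finite_norm (M l) h f.

Definition S_beurling (R : realType) (d : nat) (M : R -> ('I_d -> nat) -> R)
  (f : 'rV[R]_d -> R) : Prop :=
  smooth f /\ forall l h : R, 0 < l -> 0 < h -> finite_norm (M l) h f.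

Definition hermite_poly (R : realType) (d : nat) (g : 'I_d -> nat) (x : 'rV[R]_d) : R :=
  (-1) ^+ mi_abs g * expR (sqnorm x) * dmulti g (fun y => expR (- sqnorm y)) x.

Definition hermite_fun (R : realType) (d : nat) (g : 'I_d -> nat) (x : 'rV[R]_d) : R :=
  (Num.sqrt (2 ^+ mi_abs g * (mi_fact g)%:R * Num.sqrt (pi ^+ d)))^-1 *
  hermite_poly g x * expR (- sqnorm x / 2).

From Pilot Require Import Defs.
From HB Require Import structures.
From mathcomp Require Import all_boot all_order all_algebra.
From mathcomp Require Import all_classical all_reals all_analysis.
From mathcomp Require Import ring.
Set Implicit Arguments. Unset Strict Implicit. Unset Printing Implicit Defensive.
Import Order.TTheory GRing.Theory Num.Theory.
Import numFieldNormedType.Exports.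
Local Open Scope ring_scope.

(* A Hermite function is a tensor product of one-variable functions
   [p(t) e^{-t^2/2}] with [p] a polynomial, and differentiating such a factor
   gives [(p' - t p)(t) e^{-t^2/2}].  Measure [p] by the weighted coefficient
   norm [sum_k |p_k| sqrt(k!)]: it dominates [sup_t |p(t)| e^{-t^2/2}] because
   [|t|^k e^{-t^2/2} <= sqrt(k!)], and on polynomials of degree below [n] both
   multiplication by [t] and differentiation cost at most a factor [sqrt n].
   Hence [|x^a d^b H_g(x)| <= K 4^{|a+b|} (a+b)^{(a+b)/2}], and (R1), resp.
   (B1), taken at [beta = 0] turns the right-hand side into [h^{|a+b|} M_{a+b}]. *)

Section PolyGauss.
Variable R : realType.
Implicit Types (w t : R) (p : {poly R}).

Definition gauss w t : R := expR (- (w * t ^+ 2)).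

Definition pgauss w p t : R := p.[t] * gauss w t.

Definition gauss_diff w p : {poly R} := p^`() - (2 * w) *: ('X * p).

Lemma is_derive_pgauss w p t : is_derive t 1 (pgauss w p) (pgauss w (gauss_diff w p) t).
Proof.
have -> : pgauss w p = (horner p * gauss w)%R by apply/funext.
apply: is_derive_eq.
by rewrite /pgauss /gauss_diff !hornerE /= /gauss expr2 /GRing.scale /= mulrA; ring.
Qed.

Lemma derivable_pgauss w p t : derivable (pgauss w p) t 1.
Proof. exact: (@ex_derive _ _ _ _ _ _ _ (is_derive_pgauss w p t)). Qed.

Lemma continuous_pgauss w p : continuous (pgauss w p).
Proof.
move=> t; apply/differentiable_continuous/derivable1_diffP.
exact: derivable_pgauss.
Qed.

End PolyGauss.

Section Tensor.
Local Open Scope classical_set_scope.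
Variables (R : realType) (d : nat).
Implicit Types (c : R) (f : 'I_d -> R -> R) (x : 'rV[R]_d).

Definition tensor c f x : R := c * \prod_(i < d) f i (x 0 i).

Lemma is_derive_line (F : 'rV[R]_d -> R) (a v : 'rV[R]_d) (g : R -> R) (t0 k dg : R) :
  (forall h : R, F (h *: v + a) = k * g (h + t0)) -> is_derive t0 1 g dg ->
  is_derive a v F (k * dg).
Proof.
move=> Fg dG; have Fa : F a = k * g t0 by rewrite -[a]add0r -(scale0r v) Fg add0r.
have quotient_eq : (fun h : R => h^-1 *: ((F \o shift a) (h *: v) - F a)) =
    (fun h : R => k * (h^-1 *: ((g \o shift t0) (h *: (1:R)) - g t0))).
  by apply/funext => h; rewrite /= Fg Fa /GRing.scale /= mulr1; ring.
have cvg_g : (fun h : R => h^-1 *: ((g \o shift t0) (h *: (1:R)) - g t0)) @ 0^' --> dg.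
  by rewrite -(@derive_val _ _ _ _ _ _ _ dG); exact: (@ex_derive _ _ _ _ _ _ _ dG).
have cvg_F : (fun h : R => h^-1 *: ((F \o shift a) (h *: v) - F a)) @ 0^' --> k * dg.
  by rewrite quotient_eq; apply: cvgMr.
by apply: DeriveDef; [apply/cvg_ex; exists (k * dg) | exact: cvg_lim cvg_F].
Qed.

Lemma coord_shift x h (j i : 'I_d) :
  (h *: @coord_unit R d j + x) 0 i = (if i == j then h + x 0 i else x 0 i).
Proof.
rewrite /coord_unit !mxE eqxx /=; case: eqP => _ /=; first by rewrite mulr1.
by rewrite mulr0 add0r.
Qed.

Lemma is_derive_tensor c f x (j : 'I_d) df :
  is_derive (x 0 j) 1 (f j) df ->
  is_derive x (@coord_unit R d j) (tensor c f) (c * \prod_(i < d | i != j) f i (x 0 i) * df).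
Proof.
apply: is_derive_line => h; rewrite /tensor (bigD1 j) //= coord_shift eqxx addrC.
rewrite (eq_bigr (fun i => f i (x 0 i))) => [|i /negbTE ne]; last by rewrite coord_shift ne.
by rewrite [f j _ * _]mulrC mulrA.
Qed.

Lemma pderiv_tensor c f (j : 'I_d) (df : R -> R) :
  (forall t : R, is_derive t (1 : R) (f j) (df t)) ->
  pderiv j (tensor c f) = tensor c (fun i => if i == j then df else f i).
Proof.
move=> fj; apply/funext => x.
rewrite /pderiv (@derive_val _ _ _ _ _ _ _ (is_derive_tensor c (fj (x 0 j)))).
rewrite /tensor [in RHS](bigD1 j) //= eqxx [df _ * _]mulrC mulrA.
by congr (_ * _ * _); apply: eq_bigr => i /negbTE ->.
Qed.

Lemma continuous_tensor c f : (forall i, continuous (f i)) -> continuous (tensor c f).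
Proof.
move=> fc; have -> : tensor c f = (fun=> c) \* \prod_(i < d) (fun x => f i (x 0 i)).
  by apply/funext => x; rewrite /tensor fct_prodE.
move=> x; apply: continuousM; first exact: cst_continuous.
apply: (big_ind (fun F : 'rV[R]_d -> R => {for x, continuous F})).
- exact: cst_continuous.
- by move=> F G; apply: continuousM.
- move=> i _; apply: continuous_comp (fc _ _).
  exact: coord_continuous.
Qed.

End Tensor.

Section GaussTensor.
Variables (R : realType) (d : nat).
Implicit Types (w c : R) (P : 'I_d -> {poly R}).

Definition gauss_tensor w c P : 'rV[R]_d -> R := tensor c (fun i => pgauss w (P i)).

Lemma pderiv_gauss_tensor w c P (j : 'I_d) :
  pderiv j (gauss_tensor w c P) =
  gauss_tensor w c (fun i => if i == j then gauss_diff w (P i) else P i).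
Proof.
rewrite /gauss_tensor (pderiv_tensor c (fun t => is_derive_pgauss w (P j) t)).
by congr tensor; apply/funext => i; case: eqP => [->|].
Qed.

Lemma iter_pderiv_gauss_tensor w c P (j : 'I_d) n :
  iter n (pderiv j) (gauss_tensor w c P) =
  gauss_tensor w c (fun i => if i == j then iter n (gauss_diff w) (P i) else P i).
Proof.
elim: n => [|n IH] /=; first by congr gauss_tensor; apply/funext => i; case: eqP.
by rewrite IH pderiv_gauss_tensor; congr gauss_tensor; apply/funext => i; case: eqP.
Qed.

Lemma dmulti_gauss_tensor w c P (b : 'I_d -> nat) :
  dmulti b (gauss_tensor w c P) =
  gauss_tensor w c (fun i => iter (b i) (gauss_diff w) (P i)).
Proof.
have foldr_gauss_tensor (s : seq 'I_d) : uniq s ->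
    foldr (fun j g => iter (b j) (@pderiv R d j) g) (gauss_tensor w c P) s =
    gauss_tensor w c (fun i => if i \in s then iter (b i) (gauss_diff w) (P i) else P i).
  elim: s => [_|j s IH /= /andP[js us]]; first by congr gauss_tensor; apply/funext => i.
  rewrite IH // iter_pderiv_gauss_tensor; congr gauss_tensor; apply/funext => i.
  by rewrite in_cons; case: eqP => [->|] //=; rewrite (negbTE js).
rewrite /dmulti foldr_gauss_tensor ?enum_uniq //.
by congr gauss_tensor; apply/funext => i; rewrite mem_enum.
Qed.

Lemma smooth_gauss_tensor w c P : smooth (gauss_tensor w c P).
Proof.
have dseq_gauss_tensor (s : seq 'I_d) :
    exists Q, dseq s (gauss_tensor w c P) = gauss_tensor w c Q.
  elim: s => [|j s [Q IH]]; first by exists P.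
  by rewrite /dseq /= -/(dseq s _) IH pderiv_gauss_tensor; eexists.
move=> s; have [Q ->] := dseq_gauss_tensor s; split.
  by apply: continuous_tensor => i; exact: continuous_pgauss.
move=> x j; apply: ex_derive.
exact: (@is_derive_tensor _ _ c (fun i => pgauss w (Q i)) x j _ (is_derive_pgauss w _ _)).
Qed.

End GaussTensor.

Lemma binomial_le_exp2 n k : ('C(n, k) <= 2 ^ n)%N.
Proof.
case: (leqP k n) => [kn|/bin_small -> //].
have := Pascal 1 1 n; rewrite (bigD1 (Ordinal (kn : (k < n.+1)%N))) //= !exp1n muln1.
by rewrite -[X in (_ <= X ^ _)%N]/(1 + 1)%N => ->; rewrite muln1 leq_addr.
Qed.

Lemma fact_le_expn m : (m`! <= m ^ m)%N.
Proof.
elim: m => // m IH; rewrite factS expnS leq_mul2l /=.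
by apply: leq_trans IH _; case: m => // m; rewrite leq_exp2r.
Qed.

Lemma fact_addn_le n m : ((n + m)`! <= 2 ^ n * n`! * (4 ^ m * m ^ m))%N.
Proof.
rewrite -(bin_fact (leq_addr m n)) addKn.
apply: (@leq_trans (2 ^ (n + m) * (n`! * m`!))).
  by rewrite leq_mul2r binomial_le_exp2 orbT.
rewrite expnD -!mulnA leq_mul2l mulnCA leq_mul2l; apply/orP; right; apply/orP; right.
apply: leq_mul; last exact: fact_le_expn.
by case: m => // m; rewrite leq_exp2r.
Qed.

Section FactNorm.
Variable R : realType.
Implicit Types (p q : {poly R}) (n k : nat).

Definition sqrt_fact k : R := Num.sqrt k`!%:R.

Definition fact_norm n q : R := \sum_(k < n) `|q`_k| * sqrt_fact k.

Lemma sqrt_fact_ge1 k : 1 <= sqrt_fact k.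
Proof. by rewrite /sqrt_fact -[X in X <= _]sqrtr1 ler_sqrt // ler1n fact_gt0. Qed.

Lemma sqrt_fact_ge0 k : 0 <= sqrt_fact k.
Proof. exact: sqrtr_ge0. Qed.

Lemma sqrt_factS k : sqrt_fact k.+1 = Num.sqrt k.+1%:R * sqrt_fact k.
Proof. by rewrite /sqrt_fact factS natrM sqrtrM // ler0n. Qed.

Lemma sqrt_nat_le (i j : nat) : (i <= j)%N -> Num.sqrt (i%:R : R) <= Num.sqrt j%:R.
Proof. by move=> ij; rewrite ler_sqrt // ler_nat. Qed.

Lemma fact_norm_ge0 n q : 0 <= fact_norm n q.
Proof. by apply: sumr_ge0 => k _; rewrite mulr_ge0 // sqrt_fact_ge0. Qed.

Lemma fact_norm_widen n q : (size q <= n)%N -> fact_norm n.+1 q = fact_norm n q.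
Proof. by move=> sq; rewrite /fact_norm big_ord_recr /= nth_default // normr0 mul0r addr0. Qed.

Lemma fact_norm_sub n p q : fact_norm n (p - q) <= fact_norm n p + fact_norm n q.
Proof.
rewrite /fact_norm -big_split /=; apply: ler_sum => k _; rewrite coefB -mulrDl.
by rewrite ler_wpM2r ?sqrt_fact_ge0 ?ler_normB.
Qed.

Lemma fact_norm_mulX n q :
  (size q <= n)%N -> fact_norm n.+1 ('X * q) <= Num.sqrt n%:R * fact_norm n q.
Proof.
move=> sq; rewrite /fact_norm big_ord_recl /= coefXM eqxx normr0 mul0r add0r mulr_sumr.
apply: ler_sum => k _; rewrite coefXM /= sqrt_factS mulrCA.
by rewrite ler_wpM2r ?mulr_ge0 ?sqrt_fact_ge0 ?sqrt_nat_le.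
Qed.

Lemma fact_norm_deriv n q :
  (size q <= n)%N -> fact_norm n q^`() <= Num.sqrt n%:R * fact_norm n q.
Proof.
move=> sq; rewrite -(fact_norm_widen sq) /fact_norm [X in _ <= _ * X]big_ord_recl mulrDr.
rewrite ler_wpDl ?mulr_ge0 ?sqrtr_ge0 ?sqrt_fact_ge0 // mulr_sumr.
apply: ler_sum => k _; rewrite coef_deriv normrMn lift0 -[_ *+ k.+1]mulr_natr -mulrA.
have -> : (k.+1%:R : R) * sqrt_fact k = Num.sqrt k.+1%:R * sqrt_fact k.+1.
  by rewrite sqrt_factS mulrA -expr2 sqr_sqrtr // ler0n.
rewrite mulrCA ler_wpM2r ?mulr_ge0 ?sqrt_fact_ge0 //.
exact: sqrt_nat_le (ltn_ord k).
Qed.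

Lemma gauss_diff_half q : gauss_diff 2^-1 q = q^`() - 'X * q.
Proof. by rewrite /gauss_diff mulfV ?pnatr_eq0 // scale1r. Qed.

Lemma size_gauss_diff w q : (size (gauss_diff w q) <= (size q).+1)%N.
Proof.
apply: leq_trans (size_polyD _ _) _; rewrite geq_max size_polyN; apply/andP; split.
  by have [->|/lt_size_deriv/ltnW/leqW] := eqVneq q 0; rewrite ?deriv0.
apply: leq_trans (size_scale_leq _ _) _.
by apply: leq_trans (size_polyMleq _ _) _; rewrite size_polyX.
Qed.

Lemma size_iter_gauss_diff w p b : (size (iter b (gauss_diff w) p) <= size p + b)%N.
Proof.
elim: b => [|b IH]; first by rewrite addn0.
by rewrite addnS /=; apply: leq_trans (size_gauss_diff _ _) _.
Qed.

Lemma fact_norm_gauss_diff_half n q : (size q <= n)%N ->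
  fact_norm n.+1 (gauss_diff 2^-1 q) <= 2 * Num.sqrt n.+1%:R * fact_norm n q.
Proof.
move=> sq; rewrite gauss_diff_half; apply: le_trans (fact_norm_sub _ _ _) _.
have dq := fact_norm_deriv (leqW sq); rewrite (fact_norm_widen sq) in dq.
have Xq : fact_norm n.+1 ('X * q) <= Num.sqrt n.+1%:R * fact_norm n q.
  apply: le_trans (fact_norm_mulX sq) _.
  by rewrite ler_wpM2r ?fact_norm_ge0 ?sqrt_nat_le.
by apply: le_trans (lerD dq Xq) _; rewrite -mulrA mulr_natl mulr2n.
Qed.

Lemma fact_norm_iter_gauss_diff_half p b :
  fact_norm (size p + b) (iter b (gauss_diff 2^-1) p)
    <= 2 ^+ b * fact_norm (size p) p * sqrt_fact (size p + b).
Proof.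
elim: b => [|b IH].
  by rewrite addn0 expr0 mul1r ler_peMr ?fact_norm_ge0 ?sqrt_fact_ge1.
rewrite addnS /=; apply: le_trans (fact_norm_gauss_diff_half (size_iter_gauss_diff _ _ _)) _.
rewrite sqrt_factS exprS.
have s0 : 0 <= 2 * Num.sqrt (size p + b).+1%:R :> R by rewrite mulr_ge0 ?sqrtr_ge0.
by apply: le_trans (ler_wpM2l s0 IH) _; rewrite le_eqVlt; apply/orP; left; apply/eqP; ring.
Qed.

Lemma size_mulXn_le q n a : (size q <= n)%N -> (size ('X^a * q)%R <= n + a)%N.
Proof.
move=> sq; apply: leq_trans (size_polyMleq _ _) _.
by rewrite size_polyXn addSn /= addnC leq_add2r.
Qed.

Lemma fact_norm_mulXn q n a (K : R) : (size q <= n)%N ->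
  fact_norm n q <= K * sqrt_fact n -> fact_norm (n + a) ('X^a * q) <= K * sqrt_fact (n + a).
Proof.
move=> sq qK; have K0 : 0 <= K.
  rewrite -(pmulr_lge0 _ (lt_le_trans ltr01 (sqrt_fact_ge1 n))).
  exact: le_trans (fact_norm_ge0 _ _) qK.
elim: a => [|a IH]; first by rewrite expr0 mul1r addn0.
rewrite addnS exprS -mulrA; apply: le_trans (fact_norm_mulX (size_mulXn_le a sq)) _.
apply: le_trans (ler_wpM2l (sqrtr_ge0 _) IH) _.
by rewrite sqrt_factS mulrCA ler_wpM2l // ler_wpM2r ?sqrt_fact_ge0 ?sqrt_nat_le.
Qed.

Lemma pow_le_fact_expR (x : R) k : 0 <= x -> x ^+ k <= k`!%:R * expR x.
Proof.
move=> x0; case: k => [|k].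
  by rewrite expr0 fact0 mul1r (le_trans _ (expR_ge1Dx x)) // lerDl.
have f0 : 0 < (k.+1)`!%:R :> R by rewrite ltr0n fact_gt0.
rewrite mulrC -ler_pdivrMr //; apply: le_trans (expR_ge1Dxn k x0).
by rewrite lerDr.
Qed.

(* [|t|^k e^{-t^2/2} <= sqrt (k!)]: square both sides and apply [s^k <= k! e^s] to [s = t^2]. *)
Lemma pow_gauss_half_le k (t : R) : `|t| ^+ k * gauss 2^-1 t <= sqrt_fact k.
Proof.
have g0 : 0 <= gauss 2^-1 t by rewrite /gauss expR_ge0.
have g2 : gauss 2^-1 t ^+ 2 = (expR (t ^+ 2))^-1.
  rewrite /gauss -expRM_natl -expRN; congr expR.
  by rewrite mulrN mulrA mulfV ?pnatr_eq0 // mul1r.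
rewrite -(ger0_norm (mulr_ge0 (exprn_ge0 k (normr_ge0 t)) g0)) -sqrtr_sqr.
rewrite /sqrt_fact ler_sqrt ?ler0n // exprMn g2 -exprM mulnC exprM real_normK ?num_real //.
by rewrite ler_pdivrMr ?expR_gt0 // pow_le_fact_expR ?sqr_ge0.
Qed.

Lemma pgauss_half_le_fact_norm n q (t : R) : (size q <= n)%N ->
  `|pgauss 2^-1 q t| <= fact_norm n q.
Proof.
move=> sq; have g0 : 0 <= gauss 2^-1 t by rewrite /gauss expR_ge0.
rewrite /pgauss normrM (ger0_norm g0) (horner_coef_wide t sq) /fact_norm.
apply: le_trans (ler_wpM2r g0 (ler_norm_sum _ _ _)) _.
rewrite mulr_suml; apply: ler_sum => k _.
by rewrite normrM normrX -mulrA ler_wpM2l ?pow_gauss_half_le.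
Qed.

Lemma sqrt_fact_addn_le n m : sqrt_fact (n + m) <=
  Num.sqrt (2 ^ n * n`!)%:R * 2 ^+ m * Num.sqrt (m ^ m)%:R.
Proof.
apply: le_trans (_ : Num.sqrt ((2 ^ n * n`!) * (4 ^ m * m ^ m))%:R <= _).
  by rewrite ler_sqrt ?ler0n // ler_nat fact_addn_le.
rewrite !natrM !sqrtrM ?ler0n //.
suff -> : Num.sqrt ((4 ^ m)%:R : R) = 2 ^+ m by rewrite mulrA.
rewrite -[4%N]/(2 ^ 2)%N -expnM mulnC expnM natrX sqrtr_sqr ger0_norm ?ler0n //.
by rewrite natrX.
Qed.

Lemma moment_pgauss_half_bound p : exists2 K : R, 0 <= K & forall a b (t : R),
  `|t ^+ a * pgauss 2^-1 (iter b (gauss_diff 2^-1) p) t|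
    <= K * 4 ^+ (a + b) * Num.sqrt ((a + b) ^ (a + b))%:R.
Proof.
set n := size p; set A := (2 ^ n * n`!)%N.
exists (fact_norm n p * Num.sqrt A%:R); first by rewrite mulr_ge0 ?fact_norm_ge0 ?sqrtr_ge0.
move=> a b t; set m := (a + b)%N.
have sq := size_iter_gauss_diff 2^-1 p b.
have bound := fact_norm_mulXn a sq (fact_norm_iter_gauss_diff_half p b).
have -> : t ^+ a * pgauss 2^-1 (iter b (gauss_diff 2^-1) p) t =
    pgauss 2^-1 ('X^a * iter b (gauss_diff 2^-1) p) t.
  by rewrite /pgauss hornerM hornerXn mulrA.
apply: le_trans (pgauss_half_le_fact_norm _ (size_mulXn_le a sq)) _.
apply: le_trans bound _; rewrite -addnA [(b + a)%N]addnC -/m.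
have N0 : 0 <= 2 ^+ b * fact_norm n p by rewrite mulr_ge0 ?exprn_ge0 ?fact_norm_ge0.
apply: le_trans (ler_wpM2l N0 (sqrt_fact_addn_le n m)) _.
have two_pow : (2 : R) ^+ b * 2 ^+ m <= 4 ^+ m.
  have -> : (4 : R) = 2 * 2 by rewrite -natrM.
  rewrite exprMn ler_wpM2r ?exprn_ge0 // ler_weXn2l ?ler1n //.
  exact: leq_addl.
set N := fact_norm n p; set S := Num.sqrt (m ^ m)%:R; rewrite -/A.
have -> : 2 ^+ b * N * (Num.sqrt A%:R * 2 ^+ m * S) =
    N * Num.sqrt A%:R * (2 ^+ b * 2 ^+ m) * S by ring.
by rewrite ler_wpM2r ?sqrtr_ge0 // ler_wpM2l // mulr_ge0 ?fact_norm_ge0 ?sqrtr_ge0.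
Qed.

End FactNorm.

Section HalfpowBound.
Variables (R : realType) (d : nat).

Definition halfpow_bounded (A : R) (f : 'rV[R]_d -> R) : Prop :=
  exists2 K : R, 0 <= K & forall (a b : 'I_d -> nat) (x : 'rV[R]_d),
    `|monom a x * dmulti b f x| <= K * A ^+ mi_abs (mi_add a b) * mi_halfpow R (mi_add a b).

Lemma halfpow_bounded_gauss_tensor c (P : 'I_d -> {poly R}) :
  halfpow_bounded 4 (gauss_tensor 2^-1 c P).
Proof.
have [K K0 HK] := fin_all_exists2 (fun i => moment_pgauss_half_bound (P i)).
exists (`|c| * \prod_(i < d) K i); first by rewrite mulr_ge0 ?prodr_ge0.
move=> a b x; rewrite dmulti_gauss_tensor /gauss_tensor /tensor /monom mulrCA normrM.
rewrite -big_split normr_prod /= -!mulrA ler_wpM2l //.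
rewrite /mi_abs /mi_add /mi_halfpow -prodrXr -!big_split /=.
by apply: ler_prod => i _; rewrite normr_ge0 mulrA HK.
Qed.

Lemma hermite_fun_gauss_tensor (g : 'I_d -> nat) :
  @hermite_fun R d g = gauss_tensor 2^-1
    ((Num.sqrt (2 ^+ mi_abs g * (mi_fact g)%:R * Num.sqrt (pi ^+ d)))^-1 * (-1) ^+ mi_abs g)
    (fun i => iter (g i) (gauss_diff 1) 1).
Proof.
have gauss_sqnorm : (fun y : 'rV[R]_d => expR (- sqnorm y)) = gauss_tensor 1 1 (fun=> 1).
  apply/funext => y; rewrite /gauss_tensor /tensor /sqnorm mul1r -sumrN expR_sum.
  by apply: eq_bigr => i _; rewrite /pgauss /gauss hornerC !mul1r.
apply/funext => x; rewrite /hermite_fun /hermite_poly gauss_sqnorm dmulti_gauss_tensor.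
rewrite /sqnorm -sumrN mulr_suml !expR_sum /gauss_tensor /tensor.
rewrite mul1r -!mulrA; congr (_ * (_ * _)); rewrite -!big_split; apply: eq_bigr => i _ /=.
rewrite /pgauss /gauss; set q := _.[_]; set t := x 0 i.
rewrite mulrCA -mulrA -!expRD; congr (_ * expR _); ring.
Qed.

Lemma halfpow_bounded_hermite_fun (g : 'I_d -> nat) : halfpow_bounded 4 (hermite_fun g).
Proof. rewrite hermite_fun_gauss_tensor; exact: halfpow_bounded_gauss_tensor. Qed.

Lemma smooth_hermite_fun (g : 'I_d -> nat) : smooth (@hermite_fun R d g).
Proof. rewrite hermite_fun_gauss_tensor; exact: smooth_gauss_tensor. Qed.

Lemma finite_norm_halfpow_bounded (N : ('I_d -> nat) -> R) (f : 'rV[R]_d -> R) A B c :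
  halfpow_bounded A f -> 0 <= A -> (forall a, mi_halfpow R a <= B * c ^+ mi_abs a * N a) ->
  Defs.finite_norm N (A * c) f.
Proof.
move=> [K K0 fK] A0 halfpowN; exists (K * B) => a b x; apply: le_trans (fK a b x) _.
rewrite -mulrA; apply: le_trans (ler_wpM2l K0 (ler_wpM2l (exprn_ge0 _ A0) (halfpowN _))) _.
by rewrite exprMn le_eqVlt; apply/orP; left; apply/eqP; ring.
Qed.

Lemma halfpow_le_weight (N0 N : ('I_d -> nat) -> R) B C H :
  N0 (@mi_zero d) = 1 ->
  (forall a b, mi_halfpow R a * N0 b
     <= B * C ^+ mi_abs a * H ^+ mi_abs (mi_add a b) * N (mi_add a b)) ->
  forall a, mi_halfpow R a <= B * (C * H) ^+ mi_abs a * N a.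
Proof.
move=> N00 halfpowN a; have := halfpowN a (@mi_zero d).
have -> : mi_add a (@mi_zero d) = a by apply/funext => i; rewrite /mi_add addn0.
by rewrite N00 mulr1 exprMn !mulrA.
Qed.

End HalfpowBound.

Theorem proposition4p6 (R : realType) (d : nat) (M : R -> ('I_d -> nat) -> R) :
  weight_matrix M ->
  (* (i) *)
  ((* (R1) *)
   (forall l : R, 0 < l -> exists k B C H : R,
       l <= k /\ 0 < B /\ 0 < C /\ 0 < H /\
       forall a b : 'I_d -> nat,
         @mi_halfpow R d a * M l b
           <= B * C ^+ mi_abs a * H ^+ mi_abs (mi_add a b) * M k (mi_add a b)) ->
   (* (R2) *)
   (forall l : R, 0 < l -> exists k A : R,
       l <= k /\ 1 <= A /\
       forall (a : 'I_d -> nat) (j : 'I_d),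
         M l (mi_add a (mi_unit j)) <= A ^+ (mi_abs a).+1 * M k a) ->
   forall g : 'I_d -> nat, S_roumieu M (hermite_fun g)) /\
  (* (ii) *)
  ((* (B1) *)
   (forall l : R, 0 < l -> exists k H : R,
       0 < k /\ k <= l /\ 0 < H /\
       forall C : R, 0 < C -> exists B : R, 0 < B /\
         forall a b : 'I_d -> nat,
           @mi_halfpow R d a * M k b
             <= B * C ^+ mi_abs a * H ^+ mi_abs (mi_add a b) * M l (mi_add a b)) ->
   (* (B2) *)
   (forall l : R, 0 < l -> exists k A : R,
       0 < k /\ k <= l /\ 1 <= A /\
       forall (a : 'I_d -> nat) (j : 'I_d),
         M k (mi_add a (mi_unit j)) <= A ^+ (mi_abs a).+1 * M l a) ->
   forall g : 'I_d -> nat, S_beurling M (hermite_fun g)).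
Proof.
move=> [_ [M0 _]]; split=> [R1 _ g | B1 _ g]; split; try exact: smooth_hermite_fun.
- have [k [B [C [H [lk [_ [C0 [H0 halfpowM]]]]]]]] := R1 1 ltr01.
  exists k, (4 * (C * H)); split; first exact: lt_le_trans ltr01 lk.
  split; first by rewrite !mulr_gt0.
  apply: finite_norm_halfpow_bounded; [exact: halfpow_bounded_hermite_fun | by [] |].
  exact: halfpow_le_weight (M0 1 ltr01) halfpowM.
- move=> l h l0 h0; have [k [H [k0 [_ [H0 halfpowM]]]]] := B1 l l0.
  have C0 : 0 < h / (4 * H) by rewrite divr_gt0 ?mulr_gt0.
  have [B [_ halfpowMC]] := halfpowM _ C0.
  have -> : h = 4 * (h / (4 * H) * H) by field; rewrite gt_eqF.
  apply: finite_norm_halfpow_bounded; [exact: halfpow_bounded_hermite_fun | by [] |].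
  exact: halfpow_le_weight (M0 k k0) halfpowMC.
Qed.
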